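(* Let $1\le i,j,k,l\le n$ with $i<j$, $k<l$, $i\le k$. Then in ${\boldsymbol U}_{v}(\mathfrak q_n)$: \[ \mathsf E_{i,j}\mathsf E_{k,l}=\begin{cases}\mathsf E_{k,l}\mathsf E_{i,j} & (i<j<k<l\text{ or } i<k<l<j),\\ v^{-1}\mathsf E_{k,l}\mathsf E_{i,j}-\mathsf E_{i,l} & (i<j=k<l),\\ v\,\mathsf E_{k,l}\mathsf E_{i,j} & (i=k<j<l\text{ or } i<k<j=l),\\ \mathsf E_{k,l}\mathsf E_{i,j}+(v-v^{-1})\mathsf E_{i,l}\mathsf E_{k,j} & (i<k<j<l).\end{cases} \]
   Context: Let $v$ be an indeterminate. The quantum queer superalgebra ${\boldsymbol U}_{v}(\mathfrak q_n)$ is the associative superalgebra over $\mathbb Q(v)$ generated by even generators $\mathsf K_i,\mathsf K_i^{-1}$ ($1\le i\le n$), $\mathsf E_j,\mathsf F_j$ ($1\le j\le n-1$) and odd generators $\mathsf K_{\bar i}$ ($1\le i\le n$), $\mathsf E_{\bar j},\mathsf F_{\bar j}$ ($1\le j\le n-1$), subject to the following relations (indices are taken only where they make sense), where $(\epsilon_i,\alpha_j)=\delta_{i,j}-\delta_{i,j+1}$: (QQ1) $\mathsf K_i\mathsf K_i^{-1}=\mathsf K_i^{-1}\mathsf K_i=1$, $\mathsf K_i\mathsf K_j=\mathsf K_j\mathsf K_i$, $\mathsf K_i\mathsf K_{\bar j}=\mathsf K_{\bar j}\mathsf K_i$, $\mathsf K_{\bar i}\mathsf K_{\bar j}+\mathsf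 K_{\bar j}\mathsf K_{\bar i}=2\delta_{i,j}\frac{\mathsf K_i^2-\mathsf K_i^{-2}}{v^2-v^{-2}}$. (QQ2) $\mathsf K_i\mathsf E_j=v^{(\epsilon_i,\alpha_j)}\mathsf E_j\mathsf K_i$, $\mathsf K_i\mathsf E_{\bar j}=v^{(\epsilon_i,\alpha_j)}\mathsf E_{\bar j}\mathsf K_i$, $\mathsf K_i\mathsf F_j=v^{-(\epsilon_i,\alpha_j)}\mathsf F_j\mathsf K_i$, $\mathsf K_i\mathsf F_{\bar j}=v^{-(\epsilon_i,\alpha_j)}\mathsf F_{\bar j}\mathsf K_i$. (QQ3) $\mathsf K_{\bar i}\mathsf E_i-v\mathsf E_i\mathsf K_{\bar i}=\mathsf E_{\bar i}\mathsf K_i^{-1}$, $v\mathsf K_{\bar i}\mathsf E_{i-1}-\mathsf E_{i-1}\mathsf K_{\bar i}=-\mathsf K_i^{-1}\mathsf E_{\overline{i-1}}$, $\mathsf K_{\bar i}\mathsf F_i-v\mathsf F_i\mathsf K_{\bar i}=-\mathsf F_{\bar i}\mathsf K_i$, $v\mathsf K_{\bar i}\mathsf F_{i-1}-\mathsf F_{i-1}\mathsf K_{\bar i}=\mathsf K_i\mathsf F_{\overline{i-1}}$, $\mathsf K_{\bar i}\mathsf E_{\bar i}+v\mathsf E_{\bar i}\mathsf K_{\bar i}=\mathsf E_i\mathsf K_i^{-1}$, $v\mathsf K_{\bar i}\mathsf E_{\overline{i-1}}+\mathsf E_{\overline{i-1}}\mathsf K_{\bar i}=\mathsf K_i^{-1}\mathsf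 E_{i-1}$, $\mathsf K_{\bar i}\mathsf F_{\bar i}+v\mathsf F_{\bar i}\mathsf K_{\bar i}=\mathsf F_i\mathsf K_i$, $v\mathsf K_{\bar i}\mathsf F_{\overline{i-1}}+\mathsf F_{\overline{i-1}}\mathsf K_{\bar i}=\mathsf K_i\mathsf F_{i-1}$, and for $j\ne i,i-1$: $\mathsf K_{\bar i}\mathsf E_j=\mathsf E_j\mathsf K_{\bar i}$, $\mathsf K_{\bar i}\mathsf F_j=\mathsf F_j\mathsf K_{\bar i}$, $\mathsf K_{\bar i}\mathsf E_{\bar j}=-\mathsf E_{\bar j}\mathsf K_{\bar i}$, $\mathsf K_{\bar i}\mathsf F_{\bar j}=-\mathsf F_{\bar j}\mathsf K_{\bar i}$. (QQ4) $\mathsf E_i\mathsf F_j-\mathsf F_j\mathsf E_i=\delta_{i,j}\frac{\mathsf K_i\mathsf K_{i+1}^{-1}-\mathsf K_i^{-1}\mathsf K_{i+1}}{v-v^{-1}}$, $\mathsf E_{\bar i}\mathsf F_{\bar j}+\mathsf F_{\bar j}\mathsf E_{\bar i}=\delta_{i,j}\big(\frac{\mathsf K_i\mathsf K_{i+1}-\mathsf K_i^{-1}\mathsf K_{i+1}^{-1}}{v-v^{-1}}+(v-v^{-1})\mathsf K_{\bar i}\mathsf K_{\overline{i+1}}\big)$, $\mathsf E_i\mathsf F_{\bar j}-\mathsf F_{\bar j}\mathsf E_i=\delta_{i,j}(\mathsf K_{i+1}^{-1}\mathsf K_{\bar i}-\mathsf K_{\overline{i+1}}\mathsf K_i^{-1})$,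 $\mathsf E_{\bar i}\mathsf F_j-\mathsf F_j\mathsf E_{\bar i}=\delta_{i,j}(\mathsf K_{i+1}\mathsf K_{\bar i}-\mathsf K_{\overline{i+1}}\mathsf K_i)$. (QQ5) $\mathsf E_{\bar i}^2=-\frac{v-v^{-1}}{v+v^{-1}}\mathsf E_i^2$, $\mathsf F_{\bar i}^2=\frac{v-v^{-1}}{v+v^{-1}}\mathsf F_i^2$; for $|i-j|\ne1$: $\mathsf E_i\mathsf E_{\bar j}=\mathsf E_{\bar j}\mathsf E_i$, $\mathsf F_i\mathsf F_{\bar j}=\mathsf F_{\bar j}\mathsf F_i$; for $|i-j|>1$: $\mathsf E_i\mathsf E_j=\mathsf E_j\mathsf E_i$, $\mathsf F_i\mathsf F_j=\mathsf F_j\mathsf F_i$, $\mathsf E_{\bar i}\mathsf E_{\bar j}=-\mathsf E_{\bar j}\mathsf E_{\bar i}$, $\mathsf F_{\bar i}\mathsf F_{\bar j}=-\mathsf F_{\bar j}\mathsf F_{\bar i}$; $\mathsf E_i\mathsf E_{i+1}-v\mathsf E_{i+1}\mathsf E_i=\mathsf E_{\bar i}\mathsf E_{\overline{i+1}}+v\mathsf E_{\overline{i+1}}\mathsf E_{\bar i}$, $\mathsf E_i\mathsf E_{\overline{i+1}}-v\mathsf E_{\overline{i+1}}\mathsf E_i=\mathsf E_{\bar i}\mathsf E_{i+1}-v\mathsf E_{i+1}\mathsf E_{\bar i}$, $\mathsf F_i\mathsf F_{i+1}-v\mathsf F_{i+1}\mathsf F_i=-(\mathsf F_{\bar i}\mathsf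 F_{\overline{i+1}}+v\mathsf F_{\overline{i+1}}\mathsf F_{\bar i})$, $\mathsf F_i\mathsf F_{\overline{i+1}}-v\mathsf F_{\overline{i+1}}\mathsf F_i=\mathsf F_{\bar i}\mathsf F_{i+1}-v\mathsf F_{i+1}\mathsf F_{\bar i}$. (QQ6) for $|i-j|=1$: $\mathsf E_i^2X-(v+v^{-1})\mathsf E_iX\mathsf E_i+X\mathsf E_i^2=0$ for $X\in\{\mathsf E_j,\mathsf E_{\bar j}\}$ and $\mathsf F_i^2Y-(v+v^{-1})\mathsf F_iY\mathsf F_i+Y\mathsf F_i^2=0$ for $Y\in\{\mathsf F_j,\mathsf F_{\bar j}\}$. Quantum root vectors: for $1\le i\le n-1$ put $\mathsf E_{i,i+1}=\mathsf E_i$, $\overline{\mathsf E}_{i,i+1}=\mathsf E_{\bar i}$, $\mathsf E_{i+1,i}=\mathsf F_i$, $\overline{\mathsf E}_{i+1,i}=\mathsf F_{\bar i}$, and recursively for $i+1<j\le n$: $\mathsf E_{i,j}=-\mathsf E_{i,j-1}\mathsf E_{j-1}+v^{-1}\mathsf E_{j-1}\mathsf E_{i,j-1}$, $\overline{\mathsf E}_{i,j}=-\mathsf E_{i,j-1}\mathsf E_{\overline{j-1}}+v^{-1}\mathsf E_{\overline{j-1}}\mathsf E_{i,j-1}$, $\mathsf E_{j,i}=-\mathsf F_{j-1}\mathsf E_{j-1,i}+v\mathsf E_{j-1,i}\mathsf F_{j-1}$, $\overline{\mathsf E}_{j,i}=-\mathsf F_{\overline{j-1}}\mathsf E_{j-1,i}+v\mathsf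 E_{j-1,i}\mathsf F_{\overline{j-1}}$. *)

From HB Require Import structures.
From mathcomp Require Import all_boot all_order all_algebra.
Set Implicit Arguments. Unset Strict Implicit. Unset Printing Implicit Defensive.
Import Order.TTheory GRing.Theory Num.Theory.
Local Open Scope ring_scope.

Definition Qv : fieldType := {fraction {poly rat}}.
Definition qv : Qv := FracField.tofrac ('X : {poly rat}).

(* (epsilon_i, alpha_j) = delta_{i,j} - delta_{i,j+1} *)
Definition epsal (i j : nat) : int := (i == j)%:R - (i == j.+1)%:R.

Section QQ.
Variable A : algType Qv.
Local Notation v := qv.

(* Indices: K_i, K_i^{-1}, K_{bar i} for 1 <= i <= n
   (functions K, Ki, Kb); E_j, F_j, E_{bar j}, F_{bar j} for 1 <= j <= n-1
   (functions E, F, Eb, Fb).  Values outside these ranges are irrelevant. *)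
Record qq_relations (n : nat) (K Ki Kb E F Eb Fb : nat -> A) : Prop := {
  qq1_KKi : forall i, (1 <= i <= n)%N -> K i * Ki i = 1 /\ Ki i * K i = 1;
  qq1_KK : forall i j, (1 <= i <= n)%N -> (1 <= j <= n)%N -> K i * K j = K j * K i;
  qq1_KKb : forall i j, (1 <= i <= n)%N -> (1 <= j <= n)%N -> K i * Kb j = Kb j * K i;
  qq1_KbKb_eq : forall i, (1 <= i <= n)%N ->
    Kb i * Kb i + Kb i * Kb i =
      2%:R *: ((v ^+ 2 - v ^- 2)^-1 *: (K i ^+ 2 - Ki i ^+ 2));
  qq1_KbKb_neq : forall i j, (1 <= i <= n)%N -> (1 <= j <= n)%N -> i != j ->
    Kb i * Kb j + Kb j * Kb i = 0;
  qq2 : forall i j, (1 <= i <= n)%N -> (1 <= j < n)%N ->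
    [/\ K i * E j = v ^ (epsal i j) *: (E j * K i),
        K i * Eb j = v ^ (epsal i j) *: (Eb j * K i),
        K i * F j = v ^ (- epsal i j) *: (F j * K i)
      & K i * Fb j = v ^ (- epsal i j) *: (Fb j * K i)];
  qq3_same : forall i, (1 <= i < n)%N ->
    [/\ Kb i * E i - v *: (E i * Kb i) = Eb i * Ki i,
        Kb i * F i - v *: (F i * Kb i) = - (Fb i * K i),
        Kb i * Eb i + v *: (Eb i * Kb i) = E i * Ki i
      & Kb i * Fb i + v *: (Fb i * Kb i) = F i * K i];
  qq3_prev : forall i, (2 <= i <= n)%N ->
    [/\ v *: (Kb i * E i.-1) - E i.-1 * Kb i = - (Ki i * Eb i.-1),
        v *: (Kb i * F i.-1) - F i.-1 * Kb i = K i * Fb i.-1,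
        v *: (Kb i * Eb i.-1) + Eb i.-1 * Kb i = Ki i * E i.-1
      & v *: (Kb i * Fb i.-1) + Fb i.-1 * Kb i = K i * F i.-1];
  qq3_other : forall i j, (1 <= i <= n)%N -> (1 <= j < n)%N -> j != i -> j.+1 != i ->
    [/\ Kb i * E j = E j * Kb i,
        Kb i * F j = F j * Kb i,
        Kb i * Eb j = - (Eb j * Kb i)
      & Kb i * Fb j = - (Fb j * Kb i)];
  qq4_eq : forall i, (1 <= i < n)%N ->
    [/\ E i * F i - F i * E i =
          (v - v^-1)^-1 *: (K i * Ki i.+1 - Ki i * K i.+1),
        Eb i * Fb i + Fb i * Eb i =
          (v - v^-1)^-1 *: (K i * K i.+1 - Ki i * Ki i.+1)
          + (v - v^-1) *: (Kb i * Kb i.+1),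
        E i * Fb i - Fb i * E i = Ki i.+1 * Kb i - Kb i.+1 * Ki i
      & Eb i * F i - F i * Eb i = K i.+1 * Kb i - Kb i.+1 * K i];
  qq4_neq : forall i j, (1 <= i < n)%N -> (1 <= j < n)%N -> i != j ->
    [/\ E i * F j - F j * E i = 0,
        Eb i * Fb j + Fb j * Eb i = 0,
        E i * Fb j - Fb j * E i = 0
      & Eb i * F j - F j * Eb i = 0];
  qq5_sq : forall i, (1 <= i < n)%N ->
    Eb i ^+ 2 = - ((v - v^-1) / (v + v^-1)) *: E i ^+ 2 /\
    Fb i ^+ 2 = ((v - v^-1) / (v + v^-1)) *: F i ^+ 2;
  qq5_not_adj : forall i j, (1 <= i < n)%N -> (1 <= j < n)%N ->
    i != j.+1 -> j != i.+1 ->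
    E i * Eb j = Eb j * E i /\ F i * Fb j = Fb j * F i;
  qq5_far : forall i j, (1 <= i < n)%N -> (1 <= j < n)%N -> ((i.+1 < j) || (j.+1 < i))%N ->
    [/\ E i * E j = E j * E i,
        F i * F j = F j * F i,
        Eb i * Eb j = - (Eb j * Eb i)
      & Fb i * Fb j = - (Fb j * Fb i)];
  qq5_adj : forall i, (1 <= i)%N -> (i.+1 < n)%N ->
    [/\ E i * E i.+1 - v *: (E i.+1 * E i) = Eb i * Eb i.+1 + v *: (Eb i.+1 * Eb i),
        E i * Eb i.+1 - v *: (Eb i.+1 * E i) = Eb i * E i.+1 - v *: (E i.+1 * Eb i),
        F i * F i.+1 - v *: (F i.+1 * F i) = - (Fb i * Fb i.+1 + v *: (Fb i.+1 * Fb i))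
      & F i * Fb i.+1 - v *: (Fb i.+1 * F i) = Fb i * F i.+1 - v *: (F i.+1 * Fb i)];
  qq6 : forall i j, (1 <= i < n)%N -> (1 <= j < n)%N -> (i == j.+1) || (j == i.+1) ->
    (forall X, (X = E j \/ X = Eb j) ->
       E i ^+ 2 * X - (v + v^-1) *: (E i * X * E i) + X * E i ^+ 2 = 0) /\
    (forall Y, (Y = F j \/ Y = Fb j) ->
       F i ^+ 2 * Y - (v + v^-1) *: (F i * Y * F i) + Y * F i ^+ 2 = 0)
}.

(* Quantum root vectors E_{i,i+1+d} (positive part, even):
   E_{i,i+1} = E_i,
   E_{i,j} = - E_{i,j-1} E_{j-1} + v^{-1} E_{j-1} E_{i,j-1}. *)
Fixpoint Eroot_aux (E : nat -> A) (i d : nat) : A :=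
  match d with
  | 0 => E i
  | d'.+1 => - (Eroot_aux E i d' * E (i + d').+1)
             + v^-1 *: (E (i + d').+1 * Eroot_aux E i d')
  end.

Definition Eroot (E : nat -> A) (i j : nat) : A := Eroot_aux E i (j - i).-1.

End QQ.

(* Write [x, y] := v^-1 y x - x y, so that E_{i,j+1} = [E_{i,j}, E_j].  Since
   [[x, y], z] = [x, [y, z]] whenever x and z commute, E_{a,c} = [E_{a,b}, E_{b,c}]
   for all a < b < c, and root vectors with disjoint supports commute.  The
   quantum Serre relations say that E_a v-commutes with E_{a,a+2} (x y = v y x),
   and E_{a,a+2} with E_{a+1}; by induction E_{i,j} v-commutes with E_{i,l}, and
   E_{i,l} with E_{k,l}.  Finally, if W = [X, Y], U = [Y, Z], T = [W, Z] = [X, U],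
   W v-commutes with Y and Y with U, then expanding both expressions of T gives
   (1 + v^2) (Y T - T Y) = 0 and W U - U W = (v - v^-1) T Y.  For
   (X, Y, Z) = (E_{a,b}, E_{b,c}, E_{c,d}) these are the nested and crossed cases. *)

From HB Require Import structures.
From mathcomp Require Import all_boot all_order all_algebra.
From mathcomp Require Import ring zify.
Import Order.TTheory GRing.Theory Num.Theory.
Set Implicit Arguments. Unset Strict Implicit. Unset Printing Implicit Defensive.
Local Open Scope ring_scope.

Inductive lexpr (F : Type) :=
  | LAtom of nat
  | LZero
  | LAdd of lexpr F & lexpr F
  | LOpp of lexpr F
  | LScale of F & lexpr F.
Arguments LAtom {F}. Arguments LZero {F}.

Section LinearCombinations.
Variables (F : fieldType) (V : lmodType F) (atoms : seq V).

Fixpoint leval (e : lexpr F) : V :=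
  match e with
  | LAtom k => nth 0 atoms k
  | LZero => 0
  | LAdd a b => leval a + leval b
  | LOpp a => - leval a
  | LScale c a => c *: leval a
  end.

Fixpoint lcoef (e : lexpr F) (k : nat) : F :=
  match e with
  | LAtom m => if m == k then 1 else 0
  | LZero => 0
  | LAdd a b => lcoef a k + lcoef b k
  | LOpp a => - lcoef a k
  | LScale c a => c * lcoef a k
  end.

Fixpoint lcoefs_eq (l r : lexpr F) (m : nat) : Prop :=
  if m is m'.+1 then lcoefs_eq l r m' /\ lcoef l m' = lcoef r m' else True.

Lemma leval_sum e : leval e = \sum_(k < size atoms) lcoef e k *: nth 0 atoms k.
Proof.
elim: e => [m||a IHa b IHb|a IHa|c a IHa] /=.
- have [lt_m|ge_m] := ltnP m (size atoms).
    rewrite (bigD1 (Ordinal lt_m)) //= eqxx scale1r big1 ?addr0 // => k ne_km.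
    by case: eqP => [eq_mk|]; [case/eqP: ne_km; apply: val_inj | rewrite scale0r].
  rewrite nth_default // big1 // => k _.
  by case: eqP => [eq_mk|]; [move: (ltn_ord k); rewrite -eq_mk ltnNge ge_m | rewrite scale0r].
- by rewrite big1 // => k _; rewrite scale0r.
- by rewrite IHa IHb -big_split; apply: eq_bigr => k _; rewrite scalerDl.
- by rewrite IHa -sumrN; apply: eq_bigr => k _; rewrite scaleNr.
- by rewrite IHa scaler_sumr; apply: eq_bigr => k _; rewrite scalerA.
Qed.

Lemma leval_eq l r : lcoefs_eq l r (size atoms) -> leval l = leval r.
Proof.
move=> eq_lr; rewrite !leval_sum; apply: eq_bigr => -[k lt_k] _ /=; congr (_ *: _).
elim: (size atoms) eq_lr lt_k => [//|m IHm] /= [eq_m eq_lrm].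
by rewrite ltnS leq_eqVlt => /orP[/eqP->|]; last exact: IHm.
Qed.

End LinearCombinations.

Ltac lindex x atoms :=
  lazymatch atoms with
  | cons ?y ?rest =>
      match constr:(tt) with
      | _ => let _ := constr:(erefl x : x = y) in constr:(0%N)
      | _ => let k := lindex x rest in constr:(k.+1)
      end
  end.

Ltac lcollect t atoms :=
  match t with
  | ?a + ?b => let atoms' := lcollect a atoms in lcollect b atoms'
  | - ?a => lcollect a atoms
  | _ *: ?a => lcollect a atoms
  | 0 => atoms
  | _ => match constr:(tt) with
         | _ => let _ := lindex t atoms in atoms
         | _ => constr:(t :: atoms)
         end
  end.

Ltac lreify F t atoms :=
  match t with
  | ?a + ?b =>
      let ra := lreify F a atoms in let rb := lreify F b atoms in constr:(@LAdd F ra rb)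
  | - ?a => let ra := lreify F a atoms in constr:(@LOpp F ra)
  | ?c *: ?a => let ra := lreify F a atoms in constr:(@LScale F c ra)
  | 0 => constr:(@LZero F)
  | _ => let k := lindex t atoms in constr:(@LAtom F k)
  end.

(* Proves an identity between [F]-linear combinations of vectors, treated as atoms
   up to conversion, by comparing the coefficient of each atom with [field]. *)
Ltac lmod_eq F :=
  lazymatch goal with
  | |- @eq ?V ?l ?r =>
    let atoms := lcollect l (@nil V) in
    let atoms := lcollect r atoms in
    let rl := lreify F l atoms in
    let rr := lreify F r atoms in
    change (leval atoms rl = leval atoms rr);
    apply: leval_eq; rewrite /=; repeat split; first [ring | field; done]
  end.

Ltac expand :=
  repeat progress rewrite ?(mulrDl, mulrDr, mulrBl, mulrBr, mulNr, mulrN, opprK, mulrA)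
    -?scalerAl -?scalerAr.

(* [expand] keeps products left-nested, so [x * y] also occurs as [w * x * y]. *)
Lemma mulr_subst (R : pzRingType) (x y z : R) : x * y = z -> forall w, w * x * y = w * z.
Proof. by move=> xy w; rewrite -mulrA xy. Qed.

Ltac subst_mon h := rewrite ?h ?(mulr_subst h); expand.

Section QBracket.
Variables (F : fieldType) (A : algType F) (v : F).

Definition qbr (x y : A) : A := - (x * y) + v^-1 *: (y * x).
Definition qcomm (c : F) (x y : A) : Prop := x * y = c *: (y * x).

Lemma qcomm1 (x y : A) : qcomm 1 x y <-> x * y = y * x.
Proof. by rewrite /qcomm scale1r. Qed.

Lemma qbrA (x y z : A) : x * z = z * x -> qbr (qbr x y) z = qbr x (qbr y z).
Proof. by move=> xz; rewrite /qbr; expand; subst_mon xz; lmod_eq F. Qed.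

Lemma qcomm_qbrr c d (x y z : A) : qcomm c x y -> qcomm d x z -> qcomm (c * d) x (qbr y z).
Proof.
by rewrite /qcomm /qbr => xy xz; expand; subst_mon xy; subst_mon xz; subst_mon xy; lmod_eq F.
Qed.

Lemma qcomm_qbrl c d (x y z : A) : qcomm c y x -> qcomm d z x -> qcomm (c * d) (qbr y z) x.
Proof.
by rewrite /qcomm /qbr => yx zx; expand; subst_mon yx; subst_mon zx; subst_mon yx; lmod_eq F.
Qed.

Lemma commr_qbr (x y z : A) : GRing.comm x y -> GRing.comm x z -> GRing.comm x (qbr y z).
Proof. by move=> /qcomm1 xy /qcomm1 xz; apply/qcomm1; rewrite -(mulr1 1); apply: qcomm_qbrr. Qed.

Hypothesis v_neq0 : v != 0.

Lemma serre_qcommr (x y : A) :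
  x * x * y - (v + v^-1) *: (x * y * x) + y * x * x = 0 -> qcomm v x (qbr x y).
Proof.
move=> serre.
have yxx : y * x * x = (v + v^-1) *: (x * y * x) - x * x * y.
  by apply/eqP; rewrite -subr_eq0 -[X in _ == X]serre; apply/eqP; lmod_eq F.
by rewrite /qcomm /qbr; expand; rewrite yxx; expand; lmod_eq F.
Qed.

Lemma serre_qcomml (x y : A) :
  y * y * x - (v + v^-1) *: (y * x * y) + x * y * y = 0 -> qcomm v (qbr x y) y.
Proof.
move=> serre.
have xyy : x * y * y = (v + v^-1) *: (y * x * y) - y * y * x.
  by apply/eqP; rewrite -subr_eq0 -[X in _ == X]serre; apply/eqP; lmod_eq F.
by rewrite /qcomm /qbr; expand; rewrite xyy; expand; lmod_eq F.
Qed.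

Lemma qbr_nested_crossed (X Y Z W U T : A) : 1 + v ^+ 2 != 0 ->
  W = qbr X Y -> U = qbr Y Z -> T = qbr W Z -> T = qbr X U ->
  qcomm v W Y -> qcomm v Y U ->
  Y * T = T * Y /\ W * U - U * W = (v - v^-1) *: (T * Y).
Proof.
move=> v2_neq0 defW defU defTl defTr WY YU.
have WU : W * U - U * W = v *: (Y * T) - v^-1 *: (T * Y).
  by rewrite defU defTl /qbr; expand; subst_mon WY; lmod_eq F.
have YT : Y * T - T * Y = - v *: (W * U - U * W) + (v * (v - v^-1)) *: (T * Y).
  by rewrite defTr defW /qbr; expand; subst_mon YU; lmod_eq F.
have YT0 : (1 + v ^+ 2) *: (Y * T - T * Y) = 0.
  by rewrite scalerDl scale1r {1}YT WU; lmod_eq F.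
have YTc : Y * T = T * Y.
  by apply/eqP; rewrite -subr_eq0; move/eqP: YT0; rewrite scaler_eq0 (negbTE v2_neq0).
by split=> //; rewrite WU YTc; lmod_eq F.
Qed.

Lemma qcomm_qbr2l (P q U W T : A) :
  qcomm v P W -> qcomm v P T -> W * U - U * W = (v - v^-1) *: (T * q) ->
  T = qbr P U -> W = qbr P q -> qcomm v W T.
Proof.
move=> PW PT WU defT defW.
have {}WU : W * U = U * W + (v - v^-1) *: (T * q) by rewrite -WU addrC subrK.
have WP : W * P = v^-1 *: (P * W) by rewrite PW scalerA mulVf // scale1r.
suff WT : W * T = v^-1 *: (qbr P U * W) + (v - v^-1) *: (T * qbr P q).
  by rewrite /qcomm WT -defT -defW; lmod_eq F.
rewrite {1}defT /qbr; expand.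
by subst_mon WU; subst_mon WP; subst_mon WU; subst_mon PT; lmod_eq F.
Qed.

Lemma qcomm_qbr2r (P q U W T : A) :
  qcomm v W P -> qcomm v T P -> U * W - W * U = (v - v^-1) *: (T * q) ->
  T = qbr U P -> W = qbr q P -> qcomm v T W.
Proof.
move=> WP TP UW defT defW.
have {}UW : U * W = W * U + (v - v^-1) *: (T * q) by rewrite -UW addrC subrK.
have PW : P * W = v^-1 *: (W * P) by rewrite WP scalerA mulVf // scale1r.
have PT : P * T = v^-1 *: (T * P) by rewrite TP scalerA mulVf // scale1r.
have TW : T * W = v^-1 *: (W * qbr U P) + (v^-1 * (v - v^-1)) *: (T * qbr q P).
  rewrite {1}defT /qbr; expand.
  by subst_mon PW; subst_mon UW; subst_mon PW; subst_mon PT; lmod_eq F.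
rewrite -defT -defW in TW.
(* [v^2 (1 - v^-1 (v - v^-1)) = 1] lets us solve [TW] for [T * W]. *)
transitivity (v ^+ 2 *: (T * W - (v^-1 * (v - v^-1)) *: (T * W))); first by lmod_eq F.
by rewrite {1}TW; lmod_eq F.
Qed.

End QBracket.

Lemma qv_neq0 : qv != 0.
Proof. by rewrite /qv tofrac_eq0 polyX_eq0. Qed.

Lemma add1qv2_neq0 : 1 + qv ^+ 2 != 0.
Proof.
rewrite /qv -tofracXn -tofrac1 -tofracD tofrac_eq0.
by apply/eqP => /(congr1 (fun p : {poly rat} => p`_0)) /eqP; rewrite coefD coef1 coefXn coef0.
Qed.

Section RootVectors.
Variables (A : algType Qv) (n : nat) (E : nat -> A).

Lemma Eroot1 a : Eroot E a a.+1 = E a.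
Proof. by rewrite /Eroot subSnn. Qed.

Lemma ErootS a b : (a < b)%N -> Eroot E a b.+1 = qbr qv (Eroot E a b) (E b).
Proof.
move=> lt_ab; have [d ->] : exists d, b = (a + d.+1)%N by exists (b - a).-1; lia.
by rewrite /Eroot -addnS !addKn /= /qbr addnS.
Qed.

Hypothesis E_far :
  forall a b, (1 <= a)%N -> (a.+1 < b)%N -> (b < n)%N -> E a * E b = E b * E a.
Hypothesis E_qcomm_root2 :
  forall a, (1 <= a)%N -> (a.+1 < n)%N -> qcomm qv (E a) (Eroot E a a.+2).
Hypothesis root2_qcomm_E :
  forall a, (1 <= a)%N -> (a.+1 < n)%N -> qcomm qv (Eroot E a a.+2) (E a.+1).

Lemma Eroot_E_comm a b c : (1 <= a < b)%N -> (b < c < n)%N ->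
  Eroot E a b * E c = E c * Eroot E a b.
Proof.
case/andP=> a_ge1 lt_ab /andP[lt_bc lt_cn]; elim: b lt_ab lt_bc => [//|b IHb].
rewrite ltnS leq_eqVlt => /orP[/eqP <- | lt_ab] lt_bc.
  by rewrite Eroot1 E_far //; lia.
rewrite ErootS //; apply: commr_sym; apply: commr_qbr; apply: commr_sym.
  by apply: IHb; lia.
by apply: E_far; lia.
Qed.

Lemma Eroot_comm a b c d : (1 <= a < b)%N -> (b < c < d)%N -> (d <= n)%N ->
  Eroot E a b * Eroot E c d = Eroot E c d * Eroot E a b.
Proof.
move=> lt_ab /andP[lt_bc lt_cd]; elim: d lt_cd => [//|d IHd].
rewrite ltnS leq_eqVlt => /orP[/eqP <- | lt_cd] le_dn.
  by rewrite Eroot1 Eroot_E_comm //; lia.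
rewrite ErootS //; apply: commr_qbr; first by apply: IHd; lia.
by apply: Eroot_E_comm; lia.
Qed.

Lemma Eroot_qbr a b c : (1 <= a < b)%N -> (b < c <= n)%N ->
  Eroot E a c = qbr qv (Eroot E a b) (Eroot E b c).
Proof.
move=> lt_ab /andP[lt_bc]; elim: c lt_bc => [//|c IHc].
rewrite ltnS leq_eqVlt => /orP[/eqP <- | lt_bc] le_cn.
  by rewrite Eroot1 ErootS //; lia.
rewrite !ErootS ?IHc ?qbrA //; try lia.
by apply: Eroot_E_comm; lia.
Qed.

Lemma Eroot2 a : Eroot E a a.+2 = qbr qv (E a) (E a.+1).
Proof. by rewrite ErootS // Eroot1. Qed.

Lemma E_qcomm_Eroot a b : (1 <= a)%N -> (a.+2 <= b <= n)%N -> qcomm qv (E a) (Eroot E a b).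
Proof.
move=> a_ge1 /andP[]; elim: b => [//|b IHb].
rewrite ltnS leq_eqVlt => /orP[/eqP <- | lt_ab] le_bn.
  by apply: E_qcomm_root2; lia.
rewrite ErootS; last lia.
rewrite -[qv](mulr1 qv); apply: qcomm_qbrr; first by apply: IHb; lia.
by apply/qcomm1; apply: E_far; lia.
Qed.

Lemma Eroot_qcomm_E a b : (1 <= a < b)%N -> (b < n)%N -> qcomm qv (Eroot E a b.+1) (E b).
Proof.
move=> /andP[a_ge1 lt_ab] lt_bn; have [k] := ubnP (b - a).
elim: k a a_ge1 lt_ab => [//|k IHk] a a_ge1 lt_ab lt_k.
have [<- | /eqP ne_a1b] := eqVneq a.+1 b; first by apply: root2_qcomm_E; lia.
rewrite (@Eroot_qbr _ a.+1); [|lia|lia].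
rewrite Eroot1 -[qv](mul1r qv); apply: qcomm_qbrl.
  by apply/qcomm1; apply: E_far; lia.
by apply: IHk; lia.
Qed.

Lemma Eroot_qcomm_ErootSr a b : (1 <= a < b)%N -> (b < n)%N ->
  qcomm qv (Eroot E a b) (Eroot E a b.+1).
Proof.
move=> /andP[a_ge1]; elim: b => [//|b IHb].
rewrite ltnS leq_eqVlt => /orP[/eqP <- | lt_ab] lt_bn.
  by rewrite Eroot1; apply: E_qcomm_root2; lia.
have defT : Eroot E a b.+2 = qbr qv (Eroot E a b) (Eroot E b b.+2).
  by apply: Eroot_qbr; lia.
have WY : qcomm qv (Eroot E a b.+1) (E b) by apply: Eroot_qcomm_E; lia.
have YU : qcomm qv (E b) (Eroot E b b.+2) by apply: E_qcomm_root2; lia.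
have [_ cross] := qbr_nested_crossed qv_neq0 add1qv2_neq0
  (ErootS lt_ab) (Eroot2 b) (ErootS (leqW lt_ab)) defT WY YU.
have IH : qcomm qv (Eroot E a b) (Eroot E a b.+1) by apply: IHb; lia.
have PT : qcomm qv (Eroot E a b) (Eroot E a b.+2).
  rewrite ErootS; last lia.
  rewrite -[qv](mulr1 qv); apply: qcomm_qbrr IH _.
  by apply/qcomm1; apply: Eroot_E_comm; lia.
exact: (qcomm_qbr2l qv_neq0 IH PT cross defT (ErootS lt_ab)).
Qed.

Lemma Eroot_qcomm_ErootSl a b : (1 <= a)%N -> (a.+2 <= b <= n)%N ->
  qcomm qv (Eroot E a b) (Eroot E a.+1 b).
Proof.
move=> a_ge1 /andP[le_ab le_bn]; have [k] := ubnP (b - a).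
elim: k a a_ge1 le_ab => [//|k IHk] a a_ge1 le_ab lt_k.
have [<- | /eqP ne_a2b] := eqVneq a.+2 b; first by rewrite Eroot1; apply: root2_qcomm_E; lia.
have defW : Eroot E a.+1 b = qbr qv (E a.+1) (Eroot E a.+2 b).
  by rewrite (@Eroot_qbr _ a.+2) ?Eroot1 //; lia.
have defTl : Eroot E a b = qbr qv (Eroot E a a.+2) (Eroot E a.+2 b).
  by apply: Eroot_qbr; lia.
have defTr : Eroot E a b = qbr qv (E a) (Eroot E a.+1 b).
  by rewrite (@Eroot_qbr _ a.+1) ?Eroot1 //; lia.
have UY : qcomm qv (Eroot E a a.+2) (E a.+1) by apply: root2_qcomm_E; lia.
have YW : qcomm qv (E a.+1) (Eroot E a.+1 b) by apply: E_qcomm_Eroot; lia.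
have [_ cross] := qbr_nested_crossed qv_neq0 add1qv2_neq0 (Eroot2 a) defW defTl defTr UY YW.
have IH : qcomm qv (Eroot E a.+1 b) (Eroot E a.+2 b) by apply: IHk; lia.
have TP : qcomm qv (Eroot E a b) (Eroot E a.+2 b).
  rewrite defTr -[qv](mul1r qv); apply: qcomm_qbrl IH.
  by apply/qcomm1; rewrite -Eroot1; apply: Eroot_comm; lia.
exact: (qcomm_qbr2r qv_neq0 IH TP cross defTl defW).
Qed.

Lemma Eroot_qcomm_same_start i j l : (1 <= i < j)%N -> (j < l <= n)%N ->
  qcomm qv (Eroot E i j) (Eroot E i l).
Proof.
move=> lt_ij /andP[lt_jl le_ln].
have [<- | /eqP ne_j1l] := eqVneq j.+1 l; first by apply: Eroot_qcomm_ErootSr; lia.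
rewrite (@Eroot_qbr i j.+1 l); [|lia|lia].
rewrite -[qv](mulr1 qv); apply: qcomm_qbrr; first by apply: Eroot_qcomm_ErootSr; lia.
by apply/qcomm1; apply: Eroot_comm; lia.
Qed.

Lemma Eroot_qcomm_same_end i k l : (1 <= i < k)%N -> (k < l <= n)%N ->
  qcomm qv (Eroot E i l) (Eroot E k l).
Proof.
move=> lt_ik /andP[lt_kl le_ln].
have [<- | /eqP ne_i1k] := eqVneq i.+1 k; first by apply: Eroot_qcomm_ErootSl; lia.
rewrite (@Eroot_qbr i k.-1 l); [|lia|lia].
rewrite -[qv](mul1r qv); apply: qcomm_qbrl; first by apply/qcomm1; apply: Eroot_comm; lia.
have {2}-> : k = k.-1.+1 by lia.
by apply: Eroot_qcomm_ErootSl; lia.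
Qed.

Lemma Eroot_nested_crossed a b c d : (1 <= a < b)%N -> (b < c < d)%N -> (d <= n)%N ->
  Eroot E b c * Eroot E a d = Eroot E a d * Eroot E b c /\
  Eroot E a c * Eroot E b d - Eroot E b d * Eroot E a c
  = (qv - qv^-1) *: (Eroot E a d * Eroot E b c).
Proof.
move=> lt_ab /andP[lt_bc lt_cd] le_dn.
apply: (qbr_nested_crossed qv_neq0 add1qv2_neq0 (X := Eroot E a b) (Z := Eroot E c d)).
- by apply: Eroot_qbr; lia.
- by apply: Eroot_qbr; lia.
- by apply: Eroot_qbr; lia.
- by apply: Eroot_qbr; lia.
- by apply: Eroot_qcomm_same_end; lia.
- by apply: Eroot_qcomm_same_start; lia.
Qed.

Lemma Eroot_comm_nested i k l j : (1 <= i < k)%N -> (k < l < j)%N -> (j <= n)%N ->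
  Eroot E i j * Eroot E k l = Eroot E k l * Eroot E i j.
Proof. by move=> lt_ik lt_klj le_jn; have [<-] := Eroot_nested_crossed lt_ik lt_klj le_jn. Qed.

Lemma Eroot_crossed i k j l : (1 <= i < k)%N -> (k < j < l)%N -> (l <= n)%N ->
  Eroot E i j * Eroot E k l
  = Eroot E k l * Eroot E i j + (qv - qv^-1) *: (Eroot E i l * Eroot E k j).
Proof.
move=> lt_ik lt_kjl le_ln.
by have [_ <-] := Eroot_nested_crossed lt_ik lt_kjl le_ln; rewrite addrC subrK.
Qed.

End RootVectors.

Theorem lemma2p8 (n : nat) (A : algType Qv) (K Ki Kb E F Eb Fb : nat -> A) :
  qq_relations n K Ki Kb E F Eb Fb ->
  forall i j k l : nat, (1 <= i)%N -> (j <= n)%N -> (l <= n)%N ->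
  (i < j)%N -> (k < l)%N -> (i <= k)%N ->
  let Eij := Eroot E i j in
  let Ekl := Eroot E k l in
  [/\ ((i < j < k)%N && (k < l)%N) || ((i < k < l)%N && (l < j)%N) ->
        Eij * Ekl = Ekl * Eij,
      (i < j)%N && (j == k) && (k < l)%N ->
        Eij * Ekl = qv^-1 *: (Ekl * Eij) - Eroot E i l,
      ((i == k) && (k < j < l)%N) || ((i < k < j)%N && (j == l)) ->
        Eij * Ekl = qv *: (Ekl * Eij)
    & (i < k < j)%N && (j < l)%N ->
        Eij * Ekl = Ekl * Eij + (qv - qv^-1) *: (Eroot E i l * Eroot E k j)].
Proof.
move=> qq i j k l i_ge1 le_jn le_ln lt_ij lt_kl le_ik Eij Ekl; rewrite {}/Eij {}/Ekl.
have far a b : (1 <= a)%N -> (a.+1 < b)%N -> (b < n)%N -> E a * E b = E b * E a.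
  by move=> *; have [] // := qq5_far qq (i := a) (j := b); lia.
have serre a b : (1 <= a < n)%N -> (1 <= b < n)%N -> (a == b.+1) || (b == a.+1) ->
    E a * E a * E b - (qv + qv^-1) *: (E a * E b * E a) + E b * E a * E a = 0.
  move=> a_range b_range adj; have [serreE _] := qq6 qq a_range b_range adj.
  by have := serreE (E b) (or_introl erefl); rewrite !expr2 !mulrA.
have E_root2 a : (1 <= a)%N -> (a.+1 < n)%N -> qcomm qv (E a) (Eroot E a a.+2).
  by move=> *; rewrite Eroot2; apply: (serre_qcommr qv_neq0); apply: serre; lia.
have root2_E a : (1 <= a)%N -> (a.+1 < n)%N -> qcomm qv (Eroot E a a.+2) (E a.+1).
  by move=> *; rewrite Eroot2; apply: (serre_qcomml qv_neq0); apply: serre; lia.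
split.
- case/orP=> order; first by apply: (Eroot_comm far); lia.
  by apply: (Eroot_comm_nested far E_root2 root2_E); lia.
- case/andP=> /andP[_ /eqP <-] lt_jl.
  rewrite [Eroot E i l](Eroot_qbr far (b := j)) /qbr; [|lia|lia].
  by lmod_eq Qv.
- case/orP=> /andP[order1 order2].
    by move/eqP: order1 => <-; apply: (Eroot_qcomm_same_start far E_root2 root2_E); lia.
  by move/eqP: order2 => ->; apply: (Eroot_qcomm_same_end far E_root2 root2_E); lia.
- by move=> order; apply: (Eroot_crossed far E_root2 root2_E); lia.
Qed.
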